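(* For every $\Delta q>0$ there exist $k>0$ and $\theta\in(0,1/\Delta q)$ such that, when $1/b$ is Gamma distributed with shape $k$ and scale $\theta$, $$e^{(k+1)\ln(1+\Delta q\,\theta)}=\frac{\mathbb E(1/b)}{M'_{1/b}(-\Delta q)}<M_{1/b}(\Delta q)=(1-\Delta q\,\theta)^{-k},$$ i.e. the R$^2$DP Laplace mechanism with Gamma-distributed $1/b$ can satisfy the necessary condition $\frac{\mathbb E(1/b)}{M'_{1/b}(-\Delta q)}<M_{1/b}(\Delta q)$ for improving on the Laplace mechanism.
   Context: $M_{1/b}(t)=\mathbb E[e^{t/b}]$ is the moment generating function of $1/b$ and $M'_{1/b}$ its derivative. For the Gamma distribution with shape $k$ and scale $\theta$, $M(t)=(1-\theta t)^{-k}$ for $t<1/\theta$. The R$^2$DP Laplace mechanism adds $\mathrm{Lap}(b)$ noise (density $\frac1{2b}e^{-|x|/b}$) with random scale $b$ to a query of sensitivity $\Delta q$. *)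

From mathcomp Require Import all_boot all_order all_algebra.
From mathcomp Require Import all_classical all_reals all_analysis.
Set Implicit Arguments. Unset Strict Implicit. Unset Printing Implicit Defensive.
Import Order.TTheory GRing.Theory Num.Theory.
Local Open Scope ring_scope.

(* Moment generating function of a Gamma(shape k, scale theta) random
   variable, as given in the paper's context: M(t) = (1 - theta t)^(-k),
   valid for t < 1/theta. *)
Definition gamma_mgf (R : realType) (k theta : R) (t : R) : R :=
  (1 - theta * t) `^ (- k).

Definition gamma_mean (R : realType) (k theta : R) : R := k * theta.

(* With u = dq * theta, the ratio E(1/b) / M'(-dq) equals (1 + u)^(k+1) while
   M(dq) = (1 - u)^(-k); already k = 2, u = 1/2 gives 27/8 < 4. *)
From mathcomp Require Import all_boot all_order all_algebra.
From mathcomp Require Import all_classical all_reals all_analysis.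
From mathcomp Require Import lra.
Import Order.TTheory GRing.Theory Num.Theory.
Local Open Scope ring_scope.

Lemma expR_mul_ln (R : realType) (a x : R) : 0 < x -> expR (a * ln x) = x `^ a.
Proof. by move=> x_gt0; rewrite /powR gt_eqF. Qed.

Lemma derive1_gamma_mgf (R : realType) (k theta t : R) : 0 < 1 - theta * t ->
  derive1 (gamma_mgf k theta) t = k * theta * (1 - theta * t) `^ (- k - 1).
Proof.
move=> pos_t.
pose lin : R -> R := cst (1 : R) - theta \*: (id : R -> R).
have -> : gamma_mgf k theta = (@powR R)^~ (- k) \o lin by [].
have dlin : is_derive t 1 lin (- theta).
  by apply: is_derive_eq; rewrite sub0r; congr (- _); exact: mulr1.
have dpow := is_derive1_powR (- k) (pos_t : 0 < lin t).
rewrite derive1_comp; [|exact: ex_derive..].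
rewrite !derive1E (@derive_val _ _ _ _ _ _ _ dpow) (@derive_val _ _ _ _ _ _ _ dlin).
by rewrite mulrN !mulNr opprK mulrAC.
Qed.

Lemma gamma_mean_div_derive1_mgf (R : realType) (k theta d : R) :
  0 < k -> 0 < theta -> 0 <= d ->
  gamma_mean k theta / derive1 (gamma_mgf k theta) (- d)
  = expR ((k + 1) * ln (1 + d * theta)).
Proof.
move=> k_gt0 theta_gt0 d_ge0.
have shift : 1 - theta * - d = 1 + d * theta by rewrite mulrN opprK mulrC.
have base_gt0 : 0 < 1 + d * theta by rewrite ltr_pwDl // mulr_ge0 // ltW.
rewrite derive1_gamma_mgf ?shift // expR_mul_ln //.
rewrite /gamma_mean -[X in X / _]mulr1 -mulf_div divff ?mulf_neq0 ?gt_eqF // mul1r div1r.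
by rewrite -opprD powRN invrK.
Qed.

Theorem lemmaB1 (R : realType) (dq : R) : 0 < dq ->
  exists k theta : R,
    [/\ 0 < k, 0 < theta & theta < 1 / dq] /\
    [/\ expR ((k + 1) * ln (1 + dq * theta))
       = gamma_mean k theta / derive1 (gamma_mgf k theta) (- dq),
     gamma_mean k theta / derive1 (gamma_mgf k theta) (- dq) < gamma_mgf k theta dq
     & gamma_mgf k theta dq = (1 - dq * theta) `^ (- k)].
Proof.
move=> dq_gt0.
set theta := (2 * dq)^-1.
have theta_gt0 : 0 < theta by rewrite invr_gt0 mulr_gt0.
have u_half : dq * theta = 2^-1 by rewrite /theta invfM mulrCA mulfV ?gt_eqF // mulr1.
have gamma_mgf_dq : gamma_mgf 2 theta dq = (1 - dq * theta) `^ (- 2).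
  by rewrite /gamma_mgf mulrC.
exists 2, theta.
rewrite gamma_mean_div_derive1_mgf ?ltW //; split; split => //.
  by rewrite mul1r ltf_pV2 ?posrE ?mulr_gt0 //; lra.
rewrite gamma_mgf_dq u_half expR_mul_ln; last by lra.
have -> : (2 + 1 : R) = 3%:R by lra.
rewrite powR_mulrn ?powR_invn; try lra.
have -> : (1 - 2^-1 : R) = 2^-1 by lra.
by rewrite -exprVn invrK !exprS !expr0; lra.
Qed.
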